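(* Assume $C\succ 0$, $A_1,\dots,A_m$ are linearly independent, and $C^{-1}$ is linearly feasible, i.e. $\mathrm{tr}(A_\ell C^{-1})=b_\ell$ for all $\ell$. Let $X(t)$ be a differentiable solution of the general first-ansatz dynamics $$\mathrm{vec}(\dot X(t)) = G\mathcal{A}^T(\mathcal{A}G\mathcal{A}^T)^{-1}b - \mathrm{vec}(X(t)),\qquad G=\tfrac12\bigl(C^{-1}\otimes X(t) + X(t)\otimes C^{-1}\bigr),$$ with $X(0)\succ 0$ (not necessarily linearly feasible). Then at every time $t$ with $X(t)\succ 0$, $$\frac{d}{dt}\ln\det X(t) = b^T(\mathcal{A}G\mathcal{A}^T)^{-1}b - n \ \ge\ -n,$$ and consequently $X(T)\succ 0$ for every finite $T\ge 0$.
   Context: $C,A_1,\dots,A_m$ are symmetric $n\times n$ matrices and $b\in\mathbb{R}^m$. For an $n\times n$ matrix $M$, $\mathrm{vec}(M)\in\mathbb{R}^{n^2}$ is obtained by stacking the columns of $M$; $\otimes$ is the Kronecker product, with $\mathrm{vec}(ABC)=(C^T\otimes A)\mathrm{vec}(B)$. $\mathcal{A}$ is the $m\times n^2$ matrix whose $\ell$-th row is $\mathrm{vec}(A_\ell)^T$. A matrix $X$ is linearly feasible if $\mathcal{A}\,\mathrm{vec}(X)=b$. *)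

From HB Require Import structures.
From mathcomp Require Import all_boot all_order all_algebra.
From mathcomp Require Import all_classical all_reals all_analysis.
From mathcomp Require Export mxtens.
Set Implicit Arguments. Unset Strict Implicit. Unset Printing Implicit Defensive.
Import Order.TTheory GRing.Theory Num.Theory.
Local Open Scope ring_scope.

Section Defs.
Variable R : realType.

(* vec M : stacks the columns of M; entry (i, j) of M sits at index j*n + i
   (mxtens_index (j, i)).  With this convention and the standard Kronecker
   product tensmx (A *t B), (mxtens_index (i,k), mxtens_index (j,l)) entry
   = A i j * B k l, one has vec (A B C) = (C^T *t A) vec B. *)
Definition vec (n : nat) (M : 'M[R]_n) : 'cV[R]_(n * n) :=
  \col_k M (mxtens_unindex k).2 (mxtens_unindex k).1.

Definition Amat (m n : nat) (A : 'I_m -> 'M[R]_n) : 'M[R]_(m, n * n) :=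
  \matrix_(l, k) vec (A l) k 0.

Definition lin_feasible (m n : nat) (A : 'I_m -> 'M[R]_n) (b : 'cV[R]_m)
  (M : 'M[R]_n) : Prop := Amat A *m vec M = b.

Definition posdef (n : nat) (M : 'M[R]_n) : Prop :=
  M^T = M /\ forall x : 'cV[R]_n, x != 0 -> 0 < (x^T *m M *m x) 0 0.

Definition lin_indep (m n : nat) (A : 'I_m -> 'M[R]_n) : Prop :=
  forall c : 'I_m -> R, \sum_(l < m) c l *: A l = 0 -> forall l, c l = 0.

Definition Gmat (n : nat) (C X : 'M[R]_n) : 'M[R]_(n * n) :=
  2^-1 *: (invmx C *t X + X *t invmx C).

End Defs.

(* Write [K = (A G A^T)^-1].  Since [G vec(X^-1) = vec(C^-1)], Jacobi's formula
   and linear feasibility of [C^-1] give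
   [(ln det X)' = tr (X' X^-1) = vec(X^-1)^T vec X' = b^T K b - n].
   When [X] is positive definite so is [C^-1 (x) X], hence [G] and [K] are
   positive semidefinite and [b^T K b >= 0].  The right-hand side of the flow
   is [S - X] with [S] symmetric, so [X] stays symmetric, and
   [ln det X(t) >= ln det X(0) - n t] as long as [X] stays positive definite;
   this bound keeps the determinant away from [0] on [[0, T]], so [X] cannot
   leave the open cone of positive definite matrices before time [T]. *)

From HB Require Import structures.
From mathcomp Require Import all_boot all_order all_algebra.
From mathcomp Require Import all_classical all_reals all_analysis.
From mathcomp Require Import mxtens perm.
From mathcomp Require Import ring lra zify.
Import Order.TTheory GRing.Theory Num.Theory.
Import numFieldNormedType.Exports.
Set Implicit Arguments. Unset Strict Implicit. Unset Printing Implicit Defensive.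
Local Open Scope ring_scope.

Section Vectorization.
Variable R : realType.
Implicit Types n : nat.

Lemma big_mxtens (V : nmodType) n (F : 'I_(n * n) -> V) :
  \sum_k F k = \sum_i \sum_j F (mxtens_index (i, j)).
Proof.
rewrite pair_big (reindex (@mxtens_index n n)) /=; last first.
  by exists (@mxtens_unindex n n) => k _; rewrite (mxtens_indexK, mxtens_unindexK).
by apply: eq_bigr => -[i j].
Qed.

Lemma vec_mxtens n (M : 'M[R]_n) i j : vec M (mxtens_index (j, i)) 0 = M i j.
Proof. by rewrite /vec mxE mxtens_indexK. Qed.

Lemma vec_inj n : injective (@vec R n).
Proof.
by move=> M N eMN; apply/matrixP => i j; rewrite -!vec_mxtens eMN.
Qed.

Lemma vec_onto n (w : 'cV[R]_(n * n)) : exists W, w = vec W.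
Proof.
exists (\matrix_(i, j) w (mxtens_index (j, i)) 0).
apply/matrixP => k z; rewrite [z]ord1 !mxE.
by rewrite -surjective_pairing mxtens_unindexK.
Qed.

Lemma vecB n (M N : 'M[R]_n) : vec (M - N) = vec M - vec N.
Proof. by apply/matrixP => k z; rewrite !mxE. Qed.

Lemma tensmx_mul_vec n (P Q W : 'M[R]_n) :
  (P *t Q) *m vec W = vec (Q *m W *m P^T).
Proof.
apply/matrixP => k z; rewrite [z]ord1; case: (mxtens_indexP k) => a b.
rewrite vec_mxtens !mxE big_mxtens; apply: eq_bigr => c _.
under eq_bigr do rewrite tensmxE vec_mxtens.
rewrite !mxE mulr_suml; apply: eq_bigr => d _; ring.
Qed.

Lemma vec_dot n (U V : 'M[R]_n) : ((vec U)^T *m vec V) 0 0 = \tr (U^T *m V).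
Proof.
rewrite mxE big_mxtens /mxtrace; apply: eq_bigr => a _.
rewrite mxE; apply: eq_bigr => b _.
by rewrite !mxE mxtens_indexK.
Qed.

Lemma trAmat_mul m n (A : 'I_m -> 'M[R]_n) (y : 'cV[R]_m) :
  (Amat A)^T *m y = vec (\sum_l y l 0 *: A l).
Proof.
apply/matrixP => k z; rewrite [z]ord1 !mxE summxE; apply: eq_bigr => l _.
by rewrite !mxE mulrC.
Qed.

End Vectorization.

Section QuadraticForms.
Variable R : realFieldType.
Implicit Types n : nat.

Definition bform n (P : 'M[R]_n) (x y : 'cV[R]_n) : R := (x^T *m P *m y) 0 0.

Definition psdef n (P : 'M[R]_n) := P^T = P /\ forall x, 0 <= bform P x x.

Lemma bformDl n (P : 'M[R]_n) x y z : bform P (x + y) z = bform P x z + bform P y z.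
Proof. by rewrite /bform linearD /= !mulmxDl mxE. Qed.

Lemma bformDr n (P : 'M[R]_n) x y z : bform P z (x + y) = bform P z x + bform P z y.
Proof. by rewrite /bform !mulmxDr mxE. Qed.

Lemma bformZl n (P : 'M[R]_n) a x y : bform P (a *: x) y = a * bform P x y.
Proof. by rewrite /bform linearZ /= -!scalemxAl mxE. Qed.

Lemma bformZr n (P : 'M[R]_n) a x y : bform P x (a *: y) = a * bform P x y.
Proof. by rewrite /bform -!scalemxAr mxE. Qed.

Lemma bformDm n (P Q : 'M[R]_n) x y : bform (P + Q) x y = bform P x y + bform Q x y.
Proof. by rewrite /bform mulmxDr mulmxDl !mxE. Qed.

Lemma bformBm n (P Q : 'M[R]_n) x y : bform (P - Q) x y = bform P x y - bform Q x y.
Proof. by rewrite /bform mulmxBr mulmxBl !mxE. Qed.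

Lemma bformZm n (P : 'M[R]_n) a x y : bform (a *: P) x y = a * bform P x y.
Proof. by rewrite /bform -scalemxAr -scalemxAl mxE. Qed.

Lemma bformC n (P : 'M[R]_n) x y : P^T = P -> bform P x y = bform P y x.
Proof.
move=> sP; rewrite /bform -[in LHS](trmxK (x^T *m P *m y)) [in LHS]mxE.
by rewrite !trmx_mul trmxK sP mulmxA.
Qed.

Lemma bform_delta n (P : 'M[R]_n) i j : bform P (delta_mx i 0) (delta_mx j 0) = P i j.
Proof. by rewrite /bform trmx_delta -rowE -colE !mxE. Qed.

Lemma bform_sum n (P : 'M[R]_n) x y :
  bform P x y = \sum_i \sum_j x i 0 * P i j * y j 0.
Proof.
rewrite /bform mxE exchange_big; apply: eq_bigr => j _.
by rewrite mxE mulr_suml; apply: eq_bigr => i _; rewrite !mxE.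
Qed.

Lemma bform_rank1 n (c x : 'cV[R]_n) : bform (c *m c^T) x x = (c^T *m x) 0 0 ^+ 2.
Proof.
rewrite /bform !mulmxA -(mulmxA _ c^T) mxE big_ord1 expr2; congr (_ * _).
by rewrite -[in LHS](trmxK (x^T *m c)) mxE trmx_mul trmxK.
Qed.

Lemma discriminant_le0 (a b c : R) :
  0 <= c -> (forall t, 0 <= a + 2 * t * b + t ^+ 2 * c) -> b ^+ 2 <= a * c.
Proof.
move=> c0 H; have [c_eq0|cn0] := eqVneq c 0.
  rewrite c_eq0 in H *.
  have [->|bn0] := eqVneq b 0; first by rewrite expr0n mulr0.
  have := H (- (a + 1) / (2 * b)).
  have -> : a + 2 * (- (a + 1) / (2 * b)) * b + (- (a + 1) / (2 * b)) ^+ 2 * 0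
    = -1 by field.
  by move=> h; lra.
have cp : 0 < c by rewrite lt_def cn0.
have := H (- b / c).
have -> : a + 2 * (- b / c) * b + (- b / c) ^+ 2 * c = (a * c - b ^+ 2) / c
  by field.
by rewrite pmulr_lge0 ?invr_gt0 // subr_ge0.
Qed.

Lemma psdef_CauchySchwarz n (P : 'M[R]_n) x y :
  psdef P -> bform P x y ^+ 2 <= bform P x x * bform P y y.
Proof.
move=> [sP pP]; apply: discriminant_le0 (pP y) _ => t.
have := pP (x + t *: y).
rewrite !bformDl !bformDr !bformZl !bformZr (bformC _ y sP).
by congr (0 <= _); ring.
Qed.

Lemma psdef_diag0 n (P : 'M[R]_n) i j : psdef P -> P i i = 0 -> P i j = 0.
Proof.
move=> pP Pii; have := psdef_CauchySchwarz (delta_mx i 0) (delta_mx j 0) pP.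
rewrite !bform_delta Pii mul0r => h; apply/eqP; rewrite -sqrf_eq0.
by rewrite eq_le h sqr_ge0.
Qed.

(* One step of symmetric Gaussian elimination: subtracting the rank-one
   matrix through pivot [k] keeps the form nonnegative, since
   [bform Q x x] is the minimum of [bform P] on the line [x + R e_k]. *)
Lemma psdef_schur n (P : 'M[R]_n) k : psdef P -> 0 < P k k ->
  psdef (P - (P k k)^-1 *: (col k P *m (col k P)^T)).
Proof.
move=> pP Pkk; have [sP qP] := pP; split.
  by rewrite linearB /= linearZ /= trmx_mul trmxK sP.
move=> x; rewrite bformBm bformZm bform_rank1.
have -> : ((col k P)^T *m x) 0 0 = bform P (delta_mx k 0) x.
  by rewrite /bform colE trmx_mul sP.
set a := bform P (delta_mx k 0) x.
have := qP (x + (- (a / P k k)) *: delta_mx k 0).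
rewrite !bformDl !bformDr !bformZl !bformZr bform_delta (bformC x _ sP) -/a.
have pn0 : P k k != 0 by rewrite gt_eqF.
congr (0 <= _); field; exact: pn0.
Qed.

(* Peel off one pivot at a time; [d] counts the possibly nonzero rows, which
   are the last ones. *)
Lemma psdef_ge0_rank1 n (L : 'M[R]_n -> R) :
  (forall P Q, L (P - Q) = L P - L Q) -> (forall a P, L (a *: P) = a * L P) ->
  (forall u : 'cV_n, 0 <= L (u *m u^T)) ->
  forall P, psdef P -> 0 <= L P.
Proof.
move=> LB LZ Lu.
suff H d P : psdef P -> (forall i j : 'I_n, (i < n - d)%N -> P i j = 0) ->
    0 <= L P.
  by move=> P pP; apply: (H n) => // i j; rewrite subnn.
elim: d P => [|d IH] P pP Pz.
  have -> : P = 0 by apply/matrixP => i j; rewrite mxE Pz // subn0.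
  by rewrite -(subrr (0 : 'M[R]_n)) LB subrr.
have [dn|dn] := leqP n d; first by apply: IH => // i j; lia.
have kn : (n - d.+1 < n)%N by lia.
pose k := Ordinal kn.
have Pz' (i j : 'I_n) : (i < n - d)%N -> i != k -> P i j = 0.
  by move=> h1; rewrite -val_eqE /= => h2; apply: Pz; lia.
have [Pkk|Pkk] := eqVneq (P k k) 0.
  apply: IH => // i j h; have [->|ik] := eqVneq i k; first exact: psdef_diag0.
  exact: Pz'.
have Pkk_gt0 : 0 < P k k.
  by rewrite lt_def Pkk -bform_delta; apply: pP.2.
have -> : L P = L (P - (P k k)^-1 *: (col k P *m (col k P)^T))
    + (P k k)^-1 * L (col k P *m (col k P)^T) by rewrite LB LZ subrK.
apply: addr_ge0; last by apply: mulr_ge0; [rewrite invr_ge0 ltW | exact: Lu].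
apply: IH; first exact: psdef_schur.
move=> i j h; rewrite !mxE big_ord1 !mxE.
have [->|ik] := eqVneq i k.
  by rewrite -[in P j k]pP.1 mxE mulrA mulVf // mul1r subrr.
by rewrite (Pz' i j) // (Pz' i k) // !(mul0r, mulr0) subrr.
Qed.

Definition sqnorm n (x : 'cV[R]_n) : R := (x^T *m x) 0 0.

Lemma sqnormE n (x : 'cV[R]_n) : sqnorm x = \sum_i x i 0 ^+ 2.
Proof. by rewrite /sqnorm mxE; apply: eq_bigr => i _; rewrite mxE expr2. Qed.

Lemma sqr_le_sqnorm n (x : 'cV[R]_n) i : x i 0 ^+ 2 <= sqnorm x.
Proof. by rewrite sqnormE (bigD1 i) //= lerDl sumr_ge0 // => k _; rewrite sqr_ge0. Qed.

Lemma sqnorm_gt0 n (x : 'cV[R]_n) : x != 0 -> 0 < sqnorm x.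
Proof.
apply: contraNT; rewrite -leNgt sqnormE => le0; apply/eqP/matrixP => i j.
rewrite [j]ord1 mxE; apply/eqP; rewrite -sqrf_eq0.
apply/eqP/(@psumr_eq0P _ _ xpredT (fun i => x i 0 ^+ 2)) => //.
  by move=> k _; rewrite sqr_ge0.
by apply/eqP; rewrite eq_le le0 sumr_ge0 // => k _; rewrite sqr_ge0.
Qed.

Lemma bform_abs_le n (Q : 'M[R]_n) x :
  `|bform Q x x| <= (\sum_i \sum_j `|Q i j|) * sqnorm x.
Proof.
rewrite bform_sum mulr_suml; apply: le_trans (ler_norm_sum _ _ _) _.
apply: ler_sum => i _; rewrite mulr_suml.
apply: le_trans (ler_norm_sum _ _ _) _; apply: ler_sum => j _.
have -> : `|x i 0 * Q i j * x j 0| = `|Q i j| * (`|x i 0| * `|x j 0|).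
  by rewrite !normrM; ring.
apply: ler_wpM2l => //.
have := sqr_le_sqnorm x i; have := sqr_le_sqnorm x j.
rewrite -[x i 0 ^+ 2]real_normK ?num_real // -[x j 0 ^+ 2]real_normK ?num_real //.
have := sqr_ge0 (`|x i 0| - `|x j 0|); nra.
Qed.

End QuadraticForms.

Section PositiveDefinite.
Variable R : realType.
Implicit Types n : nat.

Lemma posdef_psdef n (P : 'M[R]_n) : posdef P -> psdef P.
Proof.
move=> [sP pP]; split=> // x; have [->|x0] := eqVneq x 0.
  by rewrite /bform mulmx0 mxE.
exact/ltW/pP.
Qed.

Lemma posdef_unit n (P : 'M[R]_n) : posdef P -> P \in unitmx.
Proof.
move=> [_ pP]; rewrite unitmxE unitfE; apply/negP => /det0P [v vn vP].
by have := pP v^T; rewrite trmx_eq0 trmxK vP mul0mx mxE ltxx => /(_ vn).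
Qed.

Lemma psdef_unit_posdef n (P : 'M[R]_n) : psdef P -> P \in unitmx -> posdef P.
Proof.
move=> pP Pu; split=> [|x xn]; first exact: pP.1.
rewrite lt_def pP.2 andbT; apply: contra_neq xn => Px0.
have Pxx0 y : bform P y x = 0.
  have := psdef_CauchySchwarz y x pP; rewrite [bform P x x]Px0 mulr0 => h.
  by apply/eqP; rewrite -sqrf_eq0 eq_le h sqr_ge0.
have : sqnorm (P *m x) = 0 by rewrite -[RHS](Pxx0 (P *m x)) /bform -mulmxA.
move/eqP; apply: contraTeq => xn; rewrite gt_eqF // sqnorm_gt0 //.
by apply: contraNneq xn => Px; rewrite -(mulKmx Pu x) Px mulmx0.
Qed.

Lemma posdef_convex n (P Q : 'M[R]_n) (l : R) : posdef P -> posdef Q ->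
  0 <= l <= 1 -> posdef ((1 - l) *: P + l *: Q).
Proof.
move=> [sP pP] [sQ pQ] /andP [l0 l1]; split=> [|x xn].
  by rewrite linearD !linearZ /= sP sQ.
rewrite -/(bform _ x x) bformDm !bformZm.
have [->|lneq1] := eqVneq l 1; first by rewrite subrr mul0r add0r mul1r pQ.
apply: ltr_pwDl; last by rewrite mulr_ge0 // ltW // pQ.
by rewrite mulr_gt0 ?pP // subr_gt0 lt_def eq_sym lneq1.
Qed.

Lemma posdef1 n : posdef (1%:M : 'M[R]_n).
Proof. by split=> [|x xn]; rewrite ?trmx1 // mulmx1 -/(sqnorm x) sqnorm_gt0. Qed.

Lemma psdef_mulmx_tr m N (A : 'M[R]_(m, N)) (G : 'M[R]_N) :
  psdef G -> psdef (A *m G *m A^T).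
Proof.
move=> [sG qG]; split; first by rewrite !trmx_mul trmxK sG mulmxA.
by move=> v; have := qG (A^T *m v); rewrite /bform trmx_mul trmxK !mulmxA.
Qed.

(* [invmx M] is [M] itself when [M] is singular, so no invertibility
   hypothesis is needed. *)
Lemma psdef_invmx_form n (M : 'M[R]_n) (b : 'cV[R]_n) :
  psdef M -> 0 <= (b^T *m invmx M *m b) 0 0.
Proof.
move=> [sM qM]; have [Mu|Mnu] := boolP (M \in unitmx); last first.
  by rewrite invmx_out ?inE //; exact: qM.
rewrite -{1}(mulKVmx Mu b) trmx_mul sM -!mulmxA (mulmxA M) (mulmxV Mu) mul1mx.
by have := qM (invmx M *m b); rewrite /bform -mulmxA mulKVmx.
Qed.

Lemma posdef_invmx_psdef n (C : 'M[R]_n) : posdef C -> psdef (invmx C).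
Proof.
move=> pC; have Cu := posdef_unit pC; have [sC qC] := posdef_psdef pC.
have sC' : (invmx C)^T = invmx C by rewrite trmx_inv sC.
split=> // x; have := qC (invmx C *m x).
by rewrite /bform trmx_mul sC' -!mulmxA (mulmxA C) mulmxV // mul1mx.
Qed.

(* [bform (P *t Q) (vec W) (vec W) = tr (W^T Q W P)] is linear in [P] and
   equals [bform Q (W u) (W u)] when [P = u u^T]. *)
Lemma psdef_tensmx n (P Q : 'M[R]_n) : psdef P -> psdef Q -> psdef (P *t Q).
Proof.
move=> pP [sQ qQ]; split; first by rewrite trmx_tens pP.1 sQ.
move=> w; have [W ->] := vec_onto w.
rewrite /bform -mulmxA tensmx_mul_vec vec_dot pP.1.
apply: (@psdef_ge0_rank1 _ _ (fun P => \tr (W^T *m (Q *m W *m P)))) => //.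
- by move=> P1 P2; rewrite !mulmxBr linearB.
- by move=> a P1; rewrite -!scalemxAr linearZ.
move=> u; rewrite !mulmxA mxtrace_mulC !mulmxA /mxtrace big_ord1.
by have := qQ (W *m u); rewrite /bform trmx_mul !mulmxA.
Qed.

Lemma posdef_coercive n (P : 'M[R]_n) :
  posdef P -> exists2 K, 0 < K & forall x, sqnorm x <= K * bform P x x.
Proof.
move=> pP; have Pu := posdef_unit pP; have [sP qP] := posdef_psdef pP.
set Y := invmx P; have sY : Y^T = Y by rewrite trmx_inv sP.
set S := \sum_i \sum_j `|Y i j|.
have S0 : 0 <= S by rewrite sumr_ge0 // => i _; rewrite sumr_ge0.
exists (S + 1) => [|x]; first by rewrite ltr_wpDl.
have eP : bform P x (Y *m x) = sqnorm x.
  by rewrite /bform /sqnorm !mulmxA -(mulmxA _ P) mulmxV // mulmx1.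
have eY : bform P (Y *m x) (Y *m x) = bform Y x x.
  by rewrite /bform trmx_mul sY -!mulmxA (mulmxA P) mulmxV // mul1mx mulmxA.
have CS := psdef_CauchySchwarz x (Y *m x) (posdef_psdef pP).
rewrite eP eY in CS.
have hY := le_trans (ler_norm _) (bform_abs_le Y x).
have q0 := qP x.
have N0 : 0 <= sqnorm x by rewrite sqnormE sumr_ge0 // => i _; rewrite sqr_ge0.
rewrite -/S in hY; set N := sqnorm x in N0 CS hY *; set q := bform P x x in q0 CS *.
have [->|Nn0] := eqVneq N 0; first by rewrite mulr_ge0 ?addr_ge0.
have Np : 0 < N by rewrite lt_def Nn0.
have : N * N <= q * S * N by rewrite -expr2 -mulrA; apply: le_trans CS (ler_wpM2l _ _).
rewrite ler_pM2r // => NqS; nra.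
Qed.

Lemma posdef_open n (P : 'M[R]_n) : posdef P -> exists2 e, 0 < e &
  forall Y, Y^T = Y -> (forall i j, `|Y i j - P i j| < e) -> posdef Y.
Proof.
move=> pP; have [K K0 hK] := posdef_coercive pP.
pose c : R := (n * n)%:R; have c0 : 0 <= c by [].
pose e := (K * (c + 1))^-1; have e0 : 0 < e by rewrite invr_gt0 mulr_gt0 ?ltr_wpDl.
exists e => // Y sY hY; split=> // x xn.
have Np := sqnorm_gt0 xn.
have hs : \sum_i \sum_j `|(Y - P) i j| <= c * e.
  apply: (@le_trans _ _ (\sum_(i < n) \sum_(j < n) e)).
    by apply: ler_sum => i _; apply: ler_sum => j _; rewrite !mxE ltW.
  by rewrite !sumr_const card_ord -mulrnA mulr_natl.
have hr := bform_abs_le (Y - P) x.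
have hq := hK x.
have ceK : c * e * K < 1.
  have c1 : 0 < c + 1 by rewrite ltr_wpDl.
  have -> : c * e * K = c / (c + 1).
    by rewrite /e; field; rewrite ?gt_eqF.
  by rewrite ltr_pdivrMr // mul1r ltrDl.
rewrite -/(bform Y x x) -[Y](subrK P) bformDm.
set N := sqnorm x in Np hr hq *; set r := bform (Y - P) x x in hr *.
set q := bform P x x in hq *; set s := \sum_i _ in hr hs.
have hsN : - r <= c * e * N.
  apply: le_trans (ler_wpM2r (ltW Np) hs); apply: le_trans hr.
  by rewrite -normrN ler_norm.
have := ler_wpM2l (ltW K0) hsN.
have : c * e * K * N < N by rewrite gtr_pMl.
rewrite -(pmulr_rgt0 _ K0); lra.
Qed.

End PositiveDefinite.

Section Gmat.
Variable R : realType.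
Variables (m n : nat) (C : 'M[R]_n).
Hypothesis sC : C^T = C.

Let sCV : (invmx C)^T = invmx C. Proof. by rewrite trmx_inv sC. Qed.

Lemma trmx_Gmat (X : 'M[R]_n) : X^T = X -> (Gmat C X)^T = Gmat C X.
Proof. by move=> sX; rewrite /Gmat linearZ /= linearD /= !trmx_tens sCV sX addrC. Qed.

Lemma Gmat_psdef (X : 'M[R]_n) : posdef C -> psdef X -> psdef (Gmat C X).
Proof.
move=> pC pX; have pCV := posdef_invmx_psdef pC; split.
  by rewrite trmx_Gmat // pX.1.
move=> w; rewrite /Gmat bformZm bformDm mulr_ge0 ?invr_ge0 ?addr_ge0 //.
  exact: (psdef_tensmx pCV pX).2.
exact: (psdef_tensmx pX pCV).2.
Qed.

Lemma Gmat_mul_vec (X W : 'M[R]_n) :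
  Gmat C X *m vec W = vec (2^-1 *: (X *m W *m invmx C + invmx C *m W *m X^T)).
Proof.
rewrite /Gmat -scalemxAl mulmxDl !tensmx_mul_vec sCV.
by apply/matrixP => i j; rewrite !mxE.
Qed.

Lemma Gmat_mul_vec_invmx (X : 'M[R]_n) : C \in unitmx -> X^T = X ->
  X \in unitmx -> Gmat C X *m vec (invmx X) = vec (invmx C).
Proof.
move=> Cu sX Xu; rewrite Gmat_mul_vec sX mulmxV // mul1mx -mulmxA mulVmx // mulmx1.
by congr vec; apply/matrixP => i j; rewrite !mxE; field.
Qed.

Lemma Gmat_Amat_mul_sym (A : 'I_m -> 'M[R]_n) (X : 'M[R]_n) (y : 'cV[R]_m) :
  (forall l, (A l)^T = A l) ->
  exists2 S : 'M[R]_n, S^T = S & Gmat C X *m (Amat A)^T *m y = vec S.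
Proof.
move=> sA; rewrite -mulmxA trAmat_mul Gmat_mul_vec; eexists; last by [].
set W := \sum_l _.
have sW : W^T = W.
  by rewrite /W linear_sum; apply: eq_bigr => l _; rewrite linearZ /= sA.
by rewrite linearZ /= linearD /= !trmx_mul !trmxK sW sCV !mulmxA addrC.
Qed.

(* [tr (D X^-1) = vec(X^-1)^T vec D] and [G vec(X^-1) = vec(C^-1)], so linear
   feasibility of [C^-1] turns the first term into [b^T K b]. *)
Lemma mxtrace_flow_invmx (A : 'I_m -> 'M[R]_n) (b : 'cV[R]_m) (K : 'M[R]_m)
    (X D : 'M[R]_n) :
  C \in unitmx -> X^T = X -> X \in unitmx -> lin_feasible A b (invmx C) ->
  vec D = Gmat C X *m (Amat A)^T *m K *m b - vec X ->
  \tr (D *m invmx X) = (b^T *m K *m b) 0 0 - n%:R.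
Proof.
move=> Cu sX Xu hF hD; set Y := invmx X.
have sY : Y^T = Y by rewrite trmx_inv sX.
have mxBE (U V : 'M[R]_1) : (U - V) 0 0 = U 0 0 - V 0 0 by rewrite !mxE.
rewrite mxtrace_mulC -[in Y *m D]sY -vec_dot hD mulmxBr mxBE.
rewrite vec_dot sY mulVmx // mxtrace1; congr (_ - _).
have e1 : (vec Y)^T *m Gmat C X = (vec (invmx C))^T.
  by rewrite -(Gmat_mul_vec_invmx Cu sX Xu) trmx_mul trmx_Gmat.
have e2 : (vec (invmx C))^T *m (Amat A)^T = b^T by rewrite -trmx_mul hF.
by rewrite !mulmxA e1 e2.
Qed.

End Gmat.

Section Derivatives.
Variable R : realType.

Lemma is_derive_big_sum (V W : normedModType R) (I : Type) (r : seq I)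
    (f : I -> V -> W) (df : I -> W) (x v : V) :
  (forall i, is_derive x v (f i) (df i)) ->
  is_derive x v (fun s => \sum_(i <- r) f i s) (\sum_(i <- r) df i).
Proof.
move=> hf; rewrite -fct_sumE.
by elim/big_ind2: _ => // *; [exact: (is_derive_cst (0 : W)) | exact: is_deriveD].
Qed.

Lemma is_derive_big_prod (I : eqType) (r : seq I) (f : I -> R -> R)
    (df : I -> R) (x : R) :
  uniq r -> (forall i, is_derive x 1 (f i) (df i)) ->
  is_derive x 1 (fun s => \prod_(i <- r) f i s)
    (\sum_(i <- r) \prod_(j <- r) (if j == i then df j else f j x)).
Proof.
move=> + hf; rewrite -fct_prodE; elim: r => [|a r IH].
  by move=> _; rewrite !big_nil; exact: is_derive_cst.
rewrite cons_uniq => /andP [ar ur]; rewrite !big_cons eqxx.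
apply: is_derive_eq (is_deriveM (hf a) (IH ur)) _; rewrite fct_prodE /=.
rewrite /GRing.scale /= addrC mulrC mulr_sumr; congr (_ * _ + _).
  by apply: eq_big_seq => j jr; case: eqP => // ja; rewrite -ja jr in ar.
apply: eq_big_seq => i ir; rewrite big_cons.
by case: eqP => // ai; rewrite ai ir in ar.
Qed.

Lemma is_derive_mx_entry m n (X : R -> 'M[R]_(m, n)) (t : R) i j :
  derivable X t 1 -> is_derive t 1 (fun s => X s i j) (('D_1 X t) i j).
Proof.
move=> dX; rewrite derive_mx // mxE; apply: derivableP.
exact: (derivable_mxP _ _ _).1 dX i j.
Qed.

Lemma is_derive_continuous (f : R -> R) (t d : R) :
  is_derive t 1 f d -> {for t, continuous f}.
Proof. by case=> df _; apply/differentiable_continuous/derivable1_diffP. Qed.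

Lemma is_derive_bform n (X : R -> 'M[R]_n) (t : R) x y : derivable X t 1 ->
  is_derive t 1 (fun s => bform (X s) x y) (bform ('D_1 X t) x y).
Proof.
move=> dX; under eq_fun do rewrite bform_sum.
rewrite bform_sum; apply: is_derive_big_sum => i; apply: is_derive_big_sum => j.
have -> : (fun s => x i 0 * X s i j * y j 0) = (x i 0 * y j 0) *: (fun s => X s i j).
  by apply/funext => s; change (x i 0 * X s i j * y j 0 = x i 0 * y j 0 * X s i j); ring.
apply: is_derive_eq (is_deriveZ _ (is_derive_mx_entry i j dX)) _.
by change (x i 0 * y j 0 * ('D_1 X t) i j = x i 0 * ('D_1 X t) i j * y j 0); ring.
Qed.

(* Jacobi's formula: Laplace expansion along the differentiated row. *)
Lemma is_derive_det n (F : R -> 'M[R]_n) (D : 'M[R]_n) (x : R) :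
  (forall i j, is_derive x 1 (fun s => F s i j) (D i j)) ->
  is_derive x 1 (fun s => \det (F s)) (\tr (D *m \adj (F x))).
Proof.
move=> hF.
have hterm (s : 'S_n) : is_derive x 1 (fun t => (-1) ^+ s * \prod_i F t i (s i))
    ((-1) ^+ s * \sum_i \prod_j (if j == i then D j (s j) else F x j (s j))).
  apply: is_deriveZ.
  exact: (is_derive_big_prod (f := fun i t => F t i (s i)) (index_enum_uniq _)).
apply: is_derive_eq (is_derive_big_sum _ hterm) _.
under eq_bigr do rewrite mulr_sumr.
rewrite exchange_big /mxtrace; apply: eq_bigr => i _.
pose M := \matrix_(j, l) (if j == i then D j l else F x j l).
transitivity (\det M).
  by apply: eq_bigr => s _; congr (_ * _); apply: eq_bigr => j _; rewrite mxE.
rewrite (expand_det_row _ i) mxE; apply: eq_bigr => l _.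
rewrite !mxE eqxx; congr (_ * (_ * \det _)).
by apply/matrixP => a b; rewrite !mxE eq_sym (negbTE (neq_lift _ _)).
Qed.

Lemma is_derive_lndet n (F : R -> 'M[R]_n) (D : 'M[R]_n) (x : R) :
  (forall i j, is_derive x 1 (fun s => F s i j) (D i j)) -> 0 < \det (F x) ->
  is_derive x 1 (fun s => ln (\det (F s))) (\tr (D *m invmx (F x))).
Proof.
move=> hF dpos; have hln := is_derive1_comp (is_derive1_ln dpos) (is_derive_det hF).
apply: is_derive_eq; rewrite /invmx unitmxE unitfE gt_eqF //= -scalemxAr mxtraceZ.
by rewrite mulrC.
Qed.

End Derivatives.

Section RealFunctions.
Variable R : realType.
Implicit Types (f df : R -> R) (a b : R).

Lemma is_derive_affine (c d x : R) : is_derive x 1 (fun s => c + s * d) d.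
Proof.
have -> : (fun s => c + s * d) = (cst c + d *: @id R)%R.
  by apply/funext => s; rewrite /= mulrC.
by apply: is_derive_eq; rewrite /= add0r scaler1.
Qed.

Lemma MVT_cc f df a b : a <= b ->
  (forall x, a <= x <= b -> is_derive x 1 f (df x)) ->
  exists2 c, a <= c <= b & f b - f a = df c * (b - a).
Proof.
move=> ab h.
have h1 x : x \in `]a, b[ -> is_derive x 1 f (df x).
  by rewrite in_itv /= => /andP [? ?]; apply: h; rewrite !ltW.
have h2 : {within `[a, b], continuous f}%classic.
  apply: continuous_in_subspaceT => x /set_mem; rewrite /= in_itv /= => hx.
  exact: is_derive_continuous (h x hx).
by have [c] := MVT_segment ab h1 h2; rewrite in_itv /=; exists c.
Qed.

Lemma ge_left_limit f a b c : a < b -> {for b, continuous f} ->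
  (forall r, a <= r < b -> c <= f r) -> c <= f b.
Proof.
move=> ab cf h; rewrite leNgt; apply/negP => fbc.
have e0 : 0 < c - f b by rewrite subr_gt0.
move/(@cvgrPdist_lt _ _ _ _ (nbhs_filter b)): cf => /(_ _ e0) /nbhs_ballP [d d0 hd].
pose r := Num.max a (b - d / 2).
have rb : a <= r < b by rewrite le_max lexx /= gt_max ab ltrBlDr ltrDl divr_gt0.
have br : `|b - r| < d.
  have bd : b - d / 2 <= r by rewrite le_max lexx orbT.
  case/andP: rb => _ rb; rewrite ger0_norm ?subr_ge0 ?ltW //.
  rewrite lerBlDl -lerBlDr in bd; apply: le_lt_trans bd _.
  by rewrite ltr_pdivrMr // ltr_pMr // ltr1n.
have := hd r br; have := h r rb; have := ler_norm (f r - f b).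
rewrite distrC /=; lra.
Qed.

End RealFunctions.

Section PositiveDefinitePaths.
Variable R : realType.
Implicit Types n : nat.

(* Along the segment from [1] to [P] the determinant never vanishes, so by
   the intermediate value theorem it keeps the sign of [det 1 = 1]. *)
Lemma posdef_det_gt0 n (P : 'M[R]_n) : posdef P -> 0 < \det P.
Proof.
move=> pP; pose F l := (1 - l) *: (1%:M : 'M[R]_n) + l *: P.
have detF_neq0 l : 0 <= l <= 1 -> \det (F l) != 0.
  by move=> /(posdef_convex (posdef1 R n) pP) /posdef_unit; rewrite unitmxE unitfE.
have cF l : {for l, continuous (fun s => \det (F s))}.
  apply: (is_derive_continuous (is_derive_det (D := P - 1%:M) _)) => i j.
  have -> : (fun s => F s i j) = (fun s => 1%:M i j + s * (P - 1%:M) i j).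
    by apply/funext => s; rewrite !mxE; ring.
  exact: is_derive_affine.
have F1 : F 1 = P by rewrite /F subrr scale0r add0r scale1r.
have F0 : F 0 = 1%:M by rewrite /F subr0 scale1r scale0r addr0.
rewrite -F1 lt_def detF_neq0 ?ler01 ?lexx //=; rewrite leNgt; apply/negP => neg.
have cont : {within `[0, 1], continuous (fun s => \det (F s))}%classic.
  by apply: continuous_subspaceT => x; exact: cF.
have bnd : Num.min (\det (F 0)) (\det (F 1)) <= 0 <= Num.max (\det (F 0)) (\det (F 1)).
  by rewrite F0 det1 ge_min le_max ler01 (ltW neg) orbT.
have [c] := IVT ler01 cont bnd.
by rewrite in_itv /= => /detF_neq0 /eqP.
Qed.

Lemma posdef_near n (X : R -> 'M[R]_n) (t : R) :
  derivable X t 1 -> posdef (X t) ->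
  exists2 d, 0 < d & forall s, `|t - s| < d -> (X s)^T = X s -> posdef (X s).
Proof.
move=> dX /posdef_open [e e0 he].
suff /nbhs_ballP [d d0 hd] : \forall s \near t, forall i j, `|X s i j - X t i j| < e.
  by exists d => // s ts sX; apply: he => //; apply: hd.
apply: (@filter_forall _ _ (fun i s => forall j, `|X s i j - X t i j| < e)
  (nbhs t) _) => i.
apply: (@filter_forall _ _ (fun j s => `|X s i j - X t i j| < e) (nbhs t) _) => j.
have := (@cvgrPdist_lt _ _ _ _ (nbhs_filter t) _ _).1
  (is_derive_continuous (is_derive_mx_entry i j dX)) e e0.
by apply: filterS => s; rewrite distrC.
Qed.

Lemma posdef_left_limit n (X : R -> 'M[R]_n) (delta t : R) :
  0 < delta -> 0 < t -> derivable X t 1 -> (X t)^T = X t ->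
  (forall r, 0 <= r < t -> posdef (X r) /\ delta <= \det (X r)) ->
  posdef (X t).
Proof.
move=> d0 t0 dX sX h; apply: psdef_unit_posdef.
  split=> // x; apply: (ge_left_limit (f := fun s => bform (X s) x x) t0) => [|r hr].
    exact: is_derive_continuous (is_derive_bform x x dX).
  exact: (posdef_psdef (h r hr).1).2.
rewrite unitmxE unitfE gt_eqF // (lt_le_trans d0) //.
apply: (ge_left_limit (f := fun s => \det (X s)) t0) => [|r hr]; last exact: (h r hr).2.
exact: is_derive_continuous (is_derive_det (fun i j => is_derive_mx_entry i j dX)).
Qed.

Lemma posdef_extend n (X : R -> 'M[R]_n) (t T : R) :
  derivable X t 1 -> (forall s, 0 <= s -> (X s)^T = X s) -> 0 <= t < T ->
  (forall r, 0 <= r <= t -> posdef (X r)) ->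
  exists2 s, t < s <= T & forall r, 0 <= r <= s -> posdef (X r).
Proof.
move=> dX sX /andP [t0 tT] pX.
have pXt : posdef (X t) by apply: pX; rewrite t0 lexx.
have [d d_gt0 hd] := posdef_near dX pXt.
have d2 : 0 < d / 2 by rewrite divr_gt0.
exists (Num.min (t + d / 2) T) => [|r /andP [r0 rs]].
  by rewrite lt_min tT ltrDl d2 ge_min lexx orbT.
have [rt|tr] := leP r t; first by apply: pX; rewrite r0.
apply: hd; last exact: sX.
rewrite distrC ger0_norm ?subr_ge0 ?ltW // ltrBlDl.
have rs' : r <= t + d / 2 by apply: le_trans rs _; rewrite ge_min lexx.
apply: le_lt_trans rs' _.
by rewrite ltrD2l ltr_pdivrMr // ltr_pMr // ltr1n.
Qed.

(* The supremum [tau] of the times up to which [X] stays positive definite is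
   reached (determinant bounded below) and cannot be smaller than [T]
   (positive definiteness is an open condition). *)
Lemma posdef_continuation n (X : R -> 'M[R]_n) (delta T : R) :
  0 < delta -> 0 <= T ->
  (forall t, 0 <= t -> derivable X t 1) ->
  (forall t, 0 <= t -> (X t)^T = X t) ->
  posdef (X 0) ->
  (forall t, 0 <= t <= T -> (forall r, 0 <= r <= t -> posdef (X r)) ->
     delta <= \det (X t)) ->
  posdef (X T).
Proof.
move=> d0 T0 dX sX pX0 hdet.
pose S := [set t | 0 <= t <= T /\ forall r, 0 <= r <= t -> posdef (X r)]%classic.
have S0 : S 0.
  by split=> [|r]; rewrite ?lexx ?T0 // -eq_le => /eqP <-.
have hS : has_sup S by split; [exists 0 | exists T => t [/andP [_ ?] _]].
pose tau := sup S.
have tau0 : 0 <= tau := sup_upper_bound hS S0.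
have tauT : tau <= T by apply: ge_sup => [|t [/andP [_ ?] _]] //; exists 0.
have below r : 0 <= r < tau -> (forall r', 0 <= r' <= r -> posdef (X r')).
  case/andP=> r0 rt; have e0 : 0 < tau - r by rewrite subr_gt0.
  have [t [_ ht] rt'] := sup_adherent e0 hS.
  move=> r' /andP [r'0 r'r]; apply: ht; rewrite r'0 (le_trans r'r) // ltW //.
  by move: rt'; rewrite opprB addrCA subrr addr0.
have pXtau : posdef (X tau).
  have [->|tau_neq0] := eqVneq tau 0; first exact: pX0.
  apply: (posdef_left_limit d0 _ (dX _ tau0) (sX _ tau0)) => [|r hr].
    by rewrite lt_def tau_neq0.
  case/andP: (hr) => r0 rt; split; first by apply: (below r hr); rewrite r0 lexx.
  by apply: (hdet r _ (below r hr)); rewrite r0 ltW // (lt_le_trans rt tauT).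
have Stau : S tau.
  split=> [|r /andP [r0]]; first by rewrite tau0.
  rewrite le_eqVlt => /orP [/eqP -> //|rt].
  by apply: (below r); rewrite r0 ?rt ?lexx.
have [<-|tT] := eqVneq tau T; first by apply: Stau.2; rewrite tau0 lexx.
have tlt : 0 <= tau < T by rewrite tau0 lt_def eq_sym tT.
have [s /andP [ts sT] Ss] := posdef_extend (dX _ tau0) sX tlt Stau.2.
have : S s by split=> //; rewrite sT (le_trans tau0) ?ltW.
by move/(sup_upper_bound hS); rewrite leNgt ts.
Qed.

End PositiveDefinitePaths.

Section Flow.
Variable R : realType.
Variables (m n : nat) (C : 'M[R]_n) (A : 'I_m -> 'M[R]_n) (b : 'cV[R]_m).
Variable X : R -> 'M[R]_n.
Hypothesis sC : C^T = C.
Hypothesis sA : forall l, (A l)^T = A l.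
Hypothesis pC : posdef C.
Hypothesis feas : lin_feasible A b (invmx C).
Hypothesis dX : forall t, 0 <= t -> derivable X t 1.
Hypothesis flow : forall t, 0 <= t ->
  vec ('D_1 X t) = Gmat C (X t) *m (Amat A)^T
    *m invmx (Amat A *m Gmat C (X t) *m (Amat A)^T) *m b - vec (X t).

Local Notation rate t :=
  ((b^T *m invmx (Amat A *m Gmat C (X t) *m (Amat A)^T) *m b) 0 0).

Lemma flow_derive_sym (t : R) : 0 <= t -> exists2 S, S^T = S & 'D_1 X t = S - X t.
Proof.
move=> t0; have [S sS eS] := Gmat_Amat_mul_sym sC (X t)
  (invmx (Amat A *m Gmat C (X t) *m (Amat A)^T) *m b) sA.
by exists S => //; apply: vec_inj; rewrite vecB -eS mulmxA flow.
Qed.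

(* The skew part [Y = X - X^T] obeys [Y' = -Y], so [e^t Y(t)] is constant. *)
Lemma flow_sym : (X 0)^T = X 0 -> forall t, 0 <= t -> (X t)^T = X t.
Proof.
move=> sX0 t t0; apply/matrixP => i j; rewrite mxE.
pose f s := expR s * (X s j i - X s i j).
have df s : 0 <= s <= t -> is_derive s 1 f 0.
  case/andP=> s0 _; have [S sS eD] := flow_derive_sym s0.
  apply: is_derive_eq (is_deriveM (is_derive_expR s)
    (is_deriveB (is_derive_mx_entry j i (dX s0)) (is_derive_mx_entry i j (dX s0)))) _.
  rewrite eD !mxE -[in S j i]sS mxE.
  by change (expR s * (S i j - X s j i - (S i j - X s i j))
    + (X s j i - X s i j) * expR s = 0); ring.
have [c _] := MVT_cc t0 df.
rewrite mul0r /f expR0 mul1r -{2}sX0 mxE subrr subr0 => /eqP.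
by rewrite mulf_eq0 gt_eqF ?expR_gt0 //= subr_eq0 => /eqP.
Qed.

Lemma rate_ge0 (t : R) : posdef (X t) -> 0 <= rate t.
Proof.
move=> pXt; apply: psdef_invmx_form; apply: psdef_mulmx_tr.
exact: (Gmat_psdef sC pC (posdef_psdef pXt)).
Qed.

Lemma is_derive_lndet_flow (t : R) : 0 <= t -> posdef (X t) ->
  is_derive t 1 (fun s => ln (\det (X s))) (rate t - n%:R).
Proof.
move=> t0 pXt; have Xu := posdef_unit pXt.
apply: is_derive_eq (is_derive_lndet (fun i j => is_derive_mx_entry i j (dX t0))
  (posdef_det_gt0 pXt)) _.
exact: (mxtrace_flow_invmx sC (posdef_unit pC) pXt.1 Xu feas (flow t0)).
Qed.

Lemma lndet_flow_ge (t : R) : 0 <= t -> (forall r, 0 <= r <= t -> posdef (X r)) ->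
  ln (\det (X 0)) - n%:R * t <= ln (\det (X t)).
Proof.
move=> t0 pX.
have dlndet r : 0 <= r <= t -> is_derive r 1 (fun s => ln (\det (X s))) (rate r - n%:R).
  by move=> hr; apply: is_derive_lndet_flow (pX r hr); case/andP: hr.
have [c hc e] := MVT_cc t0 dlndet.
have := mulr_ge0 (rate_ge0 (pX c hc)) t0; move: e; rewrite subr0; lra.
Qed.

End Flow.

Theorem theorem4p8 (R : realType) (m n : nat) (C : 'M[R]_n)
  (A : 'I_m -> 'M[R]_n) (b : 'cV[R]_m) (X : R -> 'M[R]_n) :
  C^T = C -> (forall l, (A l)^T = A l) ->
  posdef C -> lin_indep A -> lin_feasible A b (invmx C) ->
  (forall t : R, 0 <= t -> derivable X t 1) ->
  (forall t : R, 0 <= t ->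
     vec ('D_1 X t) =
       Gmat C (X t) *m (Amat A)^T
         *m invmx (Amat A *m Gmat C (X t) *m (Amat A)^T) *m b - vec (X t)) ->
  posdef (X 0) ->
  (forall t : R, 0 <= t -> posdef (X t) ->
     is_derive t 1 (fun s => ln (\det (X s)))
       ((b^T *m invmx (Amat A *m Gmat C (X t) *m (Amat A)^T) *m b) 0 0 - n%:R)
     /\ - (n%:R) <=
       (b^T *m invmx (Amat A *m Gmat C (X t) *m (Amat A)^T) *m b) 0 0 - n%:R)
  /\ (forall T : R, 0 <= T -> posdef (X T)).
Proof.
move=> sC sA pC _ feas dX flow pX0; split=> [t t0 pXt | T T0].
  split; first exact: is_derive_lndet_flow.
  by rewrite lerBrDr addNr; apply: rate_ge0.
apply: (@posdef_continuation _ _ _ (expR (ln (\det (X 0)) - n%:R * T))) => //.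
- exact: expR_gt0.
- exact: (flow_sym sC sA dX flow pX0.1).
move=> t /andP [t0 tT] pX.
have pXt : posdef (X t) by apply: pX; rewrite t0 lexx.
rewrite -[\det (X t)]lnK ?posrE ?posdef_det_gt0 // ler_expR.
apply: le_trans (lndet_flow_ge sC pC feas dX flow t0 pX).
by rewrite lerD2l lerN2 ler_wpM2l.
Qed.
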